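(* Let $\alpha\in(0,\pi/2]$ and let $(L,\theta)$ be a minimizer of problem $(\mathcal{P}_\alpha)$ whose curvature at both endpoints satisfies $\theta'(0)\le1$ and $\theta'(L)\le1$ (as is the case when the arc is externally tangent to the unit disk at its endpoints). Then $\theta'(0)=\theta'(L)$, $$\tfrac12\,\theta'(s)^2=\frac{1}{2\sin^2\alpha}\left(\int_0^\alpha\sqrt{\cos t}\,dt\right)^2\cos(\theta(s)-\alpha)\quad\text{for all } s\in[0,L],$$ and the minimal energy is $$E(\alpha):=\frac12\int_0^L\theta'(s)^2\,ds=\frac{1}{\sin\alpha}\left(\int_0^\alpha\sqrt{\cos t}\,dt\right)^2.$$
   Context: For $\alpha\in(0,\pi/2]$ and $L>0$, let $\mathcal{M}_{\alpha,L}$ be the set of $\theta\in H^1(0,L)$ with $\theta'\ge 0$ a.e., $\theta(0)=0$, $\theta(L)=2\alpha$, $\int_0^L\cos\theta(u)\,du=\sin2\alpha$ and $\int_0^L\sin\theta(u)\,du=1-\cos2\alpha$ ($\theta$ is the tangent angle of a convex arc parametrized by arc length from $(0,-1)$ to $(\sin2\alpha,-\cos2\alpha)$, and $\theta'$ is its curvature). Problem $(\mathcal{P}_\alpha)$ is to minimize $\frac12\int_0^L\theta'(s)^2\,ds$ over all $L>0$ and $\theta\in\mathcal{M}_{\alpha,L}$. *)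

From Stdlib Require Import Reals.
Open Scope R_scope.

Definition is_RInt (f : R -> R) (a b v : R) : Prop :=
  exists pr : Riemann_integrable f a b, RiemannInt pr = v.

Definition continuous_on_interval (f : R -> R) (a b : R) : Prop :=
  forall s, a <= s <= b ->
    forall eps, 0 < eps -> exists delta, 0 < delta /\
      forall t, a <= t <= b -> Rabs (t - s) < delta -> Rabs (f t - f s) < eps.

(* Admissible pair: length L, tangent angle theta with curvature k = theta'
   (theta(s) = int_0^s k), k >= 0, theta(0)=0, theta(L)=2 alpha, and the
   two endpoint constraints. *)
Definition admissible (alpha L : R) (theta k : R -> R) : Prop :=
  0 < L /\
  (forall s, 0 <= s <= L -> 0 <= k s) /\
  (forall s, 0 <= s <= L -> is_RInt k 0 s (theta s)) /\
  theta L = 2 * alpha /\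
  is_RInt (fun u => cos (theta u)) 0 L (sin (2 * alpha)) /\
  is_RInt (fun u => sin (theta u)) 0 L (1 - cos (2 * alpha)).

Definition has_energy (L : R) (k : R -> R) (v : R) : Prop :=
  is_RInt (fun s => (k s) ^ 2) 0 L (2 * v).

Definition is_minimizer (alpha L : R) (theta k : R -> R) (Emin : R) : Prop :=
  admissible alpha L theta k /\ has_energy L k Emin /\
  forall L' theta' k' v', admissible alpha L' theta' k' ->
    has_energy L' k' v' -> Emin <= v'.

From Stdlib Require Import Reals Lra ClassicalEpsilon.
From Coquelicot Require Import Coquelicot.
From Pilot Require Defs.
Open Scope R_scope.

(* Let C = int_0^alpha sqrt (cos t) dt and lam = C / sin alpha.  For an admissible curve the
   substitution t = theta s - alpha gives int_0^L k sqrt (cos (theta - alpha)) = 2 C, and the two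
   closing conditions give int_0^L cos (theta - alpha) = 2 sin alpha.  Hence
     0 <= int_0^L (k - lam sqrt (cos (theta - alpha)))^2 = 2 E - 2 C^2 / sin alpha,
   with equality only if k = lam sqrt (cos (theta - alpha)).  That equality case is realised by an
   admissible curve (an elastica), so a minimizer has energy exactly C^2 / sin alpha, and the
   continuity of its curvature turns the vanishing integral into the pointwise identity. *)

(** * Riemann integrals and continuity *)

Lemma Defs_is_RIntE f a b v : Defs.is_RInt f a b v <-> is_RInt f a b v.
Proof.
  split.
  - intros [pr <-]. rewrite <- (RInt_Reals f a b pr).
    apply (RInt_correct (V := R_CompleteNormedModule)), ex_RInt_Reals_1; exact pr.
  - intros H. assert (E : ex_RInt f a b) by (exists v; exact H).
    exists (ex_RInt_Reals_0 f a b E). rewrite <- RInt_Reals.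
    now apply is_RInt_unique.
Qed.

Lemma ex_RInt_of_continuous (g : R -> R) a b : (forall x, continuous g x) -> ex_RInt g a b.
Proof. intros H. apply (ex_RInt_continuous (V := R_CompleteNormedModule)); auto. Qed.

Lemma is_RInt_of_continuous (g : R -> R) a b :
  (forall x, continuous g x) -> is_RInt g a b (RInt g a b).
Proof. intros H. apply (RInt_correct (V := R_CompleteNormedModule)), ex_RInt_of_continuous, H. Qed.

Lemma RInt_point_R (g : R -> R) a : RInt g a a = 0.
Proof. exact (RInt_point (V := R_CompleteNormedModule) a g). Qed.

Lemma is_derive_RInt_of_continuous (g : R -> R) a x :
  (forall y, continuous g y) -> is_derive (fun s => RInt g a s) x (g x).
Proof.
  intros Hg. apply (is_derive_RInt g _ a x); [| apply Hg].
  apply filter_forall. intros y. apply is_RInt_of_continuous, Hg.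
Qed.

Lemma continuous_RInt_of_continuous (g : R -> R) a x :
  (forall y, continuous g y) -> continuous (fun s => RInt g a s) x.
Proof.
  intros Hg. apply (ex_derive_continuous (K := R_AbsRing) (V := R_NormedModule)).
  exists (g x). apply is_derive_RInt_of_continuous, Hg.
Qed.

Lemma is_RInt_mult_l (f : R -> R) a b c I :
  is_RInt f a b I -> is_RInt (fun x => c * f x) a b (c * I).
Proof. exact (is_RInt_scal f a b c I). Qed.

Lemma is_RInt_lin (f g : R -> R) a b If Ig p q :
  is_RInt f a b If -> is_RInt g a b Ig ->
  is_RInt (fun x => p * f x + q * g x) a b (p * If + q * Ig).
Proof.
  intros Hf Hg.
  exact (is_RInt_plus _ _ a b _ _ (is_RInt_mult_l _ a b p _ Hf) (is_RInt_mult_l _ a b q _ Hg)).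
Qed.

Lemma is_RInt_even (f : R -> R) a I : (forall x, f (- x) = f x) ->
  is_RInt f 0 a I -> is_RInt f (- a) a (2 * I).
Proof.
  intros Hf HI.
  assert (Hneg : is_RInt f (- a) 0 I).
  { apply is_RInt_swap in HI.
    rewrite <- (Ropp_involutive a), <- Ropp_0 in HI.
    apply is_RInt_comp_opp, is_RInt_opp in HI.
    rewrite opp_opp in HI.
    apply (is_RInt_ext _ _ _ _ _ (fun x _ => eq_trans (opp_opp _) (Hf x)) HI). }
  replace (2 * I) with (plus I I) by (unfold plus; simpl; ring).
  exact (is_RInt_Chasles f _ _ _ _ _ Hneg HI).
Qed.

Lemma continuous_eps_delta (f : R -> R) x : continuous f x <->
  forall eps, 0 < eps -> exists d, 0 < d /\
    forall y, Rabs (y - x) < d -> Rabs (f y - f x) < eps.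
Proof.
  split.
  - intros H. apply continuity_pt_filterlim in H.
    intros eps Heps. destruct (H eps Heps) as [d [Hd Hy]].
    exists d. split; [exact Hd |]. intros y Hyd.
    destruct (Req_dec x y) as [<- | Hne].
    + rewrite Rminus_diag, Rabs_R0. exact Heps.
    + apply (Hy y). repeat split; auto.
  - intros H. apply continuity_pt_filterlim.
    intros eps Heps. destruct (H eps Heps) as [d [Hd Hy]].
    exists d. split; [exact Hd |]. intros y [_ Hyd]. apply Hy, Hyd.
Qed.

Lemma lipschitz_continuous (f : R -> R) M x : 0 <= M ->
  (forall y z, Rabs (f y - f z) <= M * Rabs (y - z)) -> continuous f x.
Proof.
  intros HM Hf. apply continuous_eps_delta. intros eps Heps.
  exists (eps / (M + 1)). split; [apply Rdiv_lt_0_compat; lra |].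
  intros y Hy. apply Rle_lt_trans with (M * Rabs (y - x)); [apply Hf |].
  apply Rle_lt_trans with ((M + 1) * Rabs (y - x)); [pose proof (Rabs_pos (y - x)); nra |].
  apply Rmult_lt_reg_r with (/ (M + 1)); [apply Rinv_0_lt_compat; lra |].
  replace ((M + 1) * Rabs (y - x) * / (M + 1)) with (Rabs (y - x)) by (field; lra).
  exact Hy.
Qed.

Lemma RInt_eq0_nonneg_continuous (g : R -> R) a b : a < b -> (forall x, continuous g x) ->
  (forall x, a <= x <= b -> 0 <= g x) -> is_RInt g a b 0 ->
  forall s, a <= s <= b -> g s = 0.
Proof.
  intros Hab Hg Hpos Hint s Hs.
  destruct (Hpos s Hs) as [Hgt | ]; [exfalso | auto].
  destruct (proj1 (continuous_eps_delta g s) (Hg s) (g s / 2)) as [d [Hd Hnear]]; [lra |].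
  set (c := Rmax a (s - d / 2)). set (e := Rmin b (s + d / 2)).
  assert (Hc : a <= c /\ s - d / 2 <= c) by (split; [apply Rmax_l | apply Rmax_r]).
  assert (He : e <= b /\ e <= s + d / 2) by (split; [apply Rmin_l | apply Rmin_r]).
  assert (Hce : c < e) by (unfold c, e, Rmax, Rmin; repeat destruct Rle_dec; lra).
  assert (Hmid : 0 < RInt g c e).
  { apply RInt_gt_0; [exact Hce | | intros; apply Hg].
    intros x Hx. assert (Hy : Rabs (x - s) < d) by (apply Rabs_def1; lra).
    specialize (Hnear x Hy). apply Rabs_def2 in Hnear. lra. }
  assert (Hside : forall u v, a <= u <= v -> v <= b -> 0 <= RInt g u v).
  { intros u v Hu Hv. apply RInt_ge_0; [lra | apply ex_RInt_of_continuous, Hg |].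
    intros; apply Hpos; lra. }
  assert (Htot : RInt g a b = 0) by (apply is_RInt_unique, Hint).
  rewrite <- (RInt_Chasles g a c b), <- (RInt_Chasles g c e b) in Htot
    by apply ex_RInt_of_continuous, Hg.
  assert (0 <= RInt g a c) by (apply Hside; lra).
  assert (0 <= RInt g e b) by (apply Hside; lra).
  unfold plus in Htot; simpl in Htot. lra.
Qed.

Definition clamp (a b x : R) : R := Rmax a (Rmin b x).

Lemma clamp_in a b x : a <= b -> a <= clamp a b x <= b.
Proof. unfold clamp, Rmax, Rmin. intros; repeat destruct Rle_dec; lra. Qed.

Lemma clamp_id a b x : a <= x <= b -> clamp a b x = x.
Proof. unfold clamp, Rmax, Rmin. intros; repeat destruct Rle_dec; lra. Qed.

Lemma clamp_lipschitz a b x y : Rabs (clamp a b x - clamp a b y) <= Rabs (x - y).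
Proof.
  unfold clamp, Rmax, Rmin, Rabs.
  repeat destruct Rle_dec; repeat destruct Rcase_abs; lra.
Qed.

Lemma continuous_on_interval_clamp (k : R -> R) a b x : a <= b ->
  Defs.continuous_on_interval k a b -> continuous (fun y => k (clamp a b y)) x.
Proof.
  intros Hab Hk. apply continuous_eps_delta. intros eps Heps.
  destruct (Hk (clamp a b x) (clamp_in a b x Hab) eps Heps) as [d [Hd Hnear]].
  exists d. split; [exact Hd |]. intros y Hy. apply Hnear; [apply clamp_in, Hab |].
  eapply Rle_lt_trans; [apply clamp_lipschitz | exact Hy].
Qed.

(** * The energy bound *)

Lemma continuous_sqrt_cos x : continuous (fun t => sqrt (cos t)) x.
Proof. apply continuous_sqrt_comp, continuous_cos_comp, continuous_id. Qed.

Lemma is_RInt_sqrt_cos_sym a :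
  is_RInt (fun t => sqrt (cos t)) (- a) a (2 * RInt (fun t => sqrt (cos t)) 0 a).
Proof.
  apply is_RInt_even; [intros x; rewrite cos_neg; reflexivity |].
  apply is_RInt_of_continuous, continuous_sqrt_cos.
Qed.

Lemma continuous_sqrt_cos_shift (f : R -> R) c x :
  continuous f x -> continuous (fun s => sqrt (cos (f s - c))) x.
Proof.
  intros Hf. apply (continuous_comp (fun s => f s - c) (fun t => sqrt (cos t)));
    [| apply continuous_sqrt_cos].
  apply (continuous_minus f (fun _ => c)); [exact Hf | apply continuous_const].
Qed.

Section Energy_bound.

Variables (alpha L E : R) (theta k : R -> R).
Hypotheses (alpha_bounds : 0 < alpha <= PI / 2) (L_pos : 0 < L)
  (k_cont : Defs.continuous_on_interval k 0 L)
  (k_ge0 : forall s, 0 <= s <= L -> 0 <= k s)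
  (theta_primitive : forall s, 0 <= s <= L -> is_RInt k 0 s (theta s))
  (theta_L : theta L = 2 * alpha)
  (cos_theta : is_RInt (fun u => cos (theta u)) 0 L (sin (2 * alpha)))
  (sin_theta : is_RInt (fun u => sin (theta u)) 0 L (1 - cos (2 * alpha)))
  (energy : is_RInt (fun s => k s ^ 2) 0 L (2 * E)).

Let kt s := k (clamp 0 L s).
Let C := RInt (fun t => sqrt (cos t)) 0 alpha.

Let kt_continuous x : continuous kt x.
Proof. apply continuous_on_interval_clamp; [lra | exact k_cont]. Qed.

Let tangent_angle_RInt s : 0 <= s <= L -> theta s = RInt kt 0 s.
Proof.
  intros Hs. symmetry. apply is_RInt_unique.
  apply (is_RInt_ext k); [| exact (theta_primitive s Hs)].
  intros x Hx. rewrite Rmin_left, Rmax_right in Hx by lra.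
  unfold kt. rewrite clamp_id by lra. reflexivity.
Qed.

Lemma tangent_angle_0 : theta 0 = 0.
Proof. rewrite tangent_angle_RInt by lra. apply RInt_point_R. Qed.

Lemma tangent_angle_bounds s : 0 <= s <= L -> 0 <= theta s <= 2 * alpha.
Proof.
  intros Hs. rewrite <- theta_L, !tangent_angle_RInt by lra.
  assert (Hkt : forall u v, 0 <= u <= v -> v <= L -> 0 <= RInt kt u v).
  { intros u v Hu Hv. apply RInt_ge_0; [lra | apply ex_RInt_of_continuous, kt_continuous |].
    intros x Hx. unfold kt. rewrite clamp_id by lra. apply k_ge0. lra. }
  rewrite <- (RInt_Chasles kt 0 s L) by apply ex_RInt_of_continuous, kt_continuous.
  assert (0 <= RInt kt 0 s) by (apply Hkt; lra).
  assert (0 <= RInt kt s L) by (apply Hkt; lra).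
  unfold plus; simpl. lra.
Qed.

Lemma cos_tangent_angle_shift_ge0 s : 0 <= s <= L -> 0 <= cos (theta s - alpha).
Proof. intros Hs. pose proof (tangent_angle_bounds s Hs). apply cos_ge_0; lra. Qed.

(* The substitution t = theta s - alpha, whose derivative is the curvature. *)
Lemma is_RInt_curvature_sqrt_cos :
  is_RInt (fun s => k s * sqrt (cos (theta s - alpha))) 0 L (2 * C).
Proof.
  assert (Hd : forall x, is_derive (fun s => RInt kt 0 s - alpha) x (kt x)).
  { intros x. pose proof (is_derive_minus _ _ x _ _
      (is_derive_RInt_of_continuous kt 0 x kt_continuous) (is_derive_const alpha x)) as H.
    unfold minus, plus, opp, zero in H; simpl in H.
    rewrite Ropp_0, Rplus_0_r in H. exact H. }
  pose proof (is_RInt_comp (fun t => sqrt (cos t)) (fun s => RInt kt 0 s - alpha) kt 0 L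
    (fun x _ => continuous_sqrt_cos _) (fun x _ => conj (Hd x) (kt_continuous x))) as Hsub.
  cbv beta in Hsub.
  rewrite <- (tangent_angle_RInt 0), <- (tangent_angle_RInt L), tangent_angle_0, theta_L in Hsub by lra.
  replace (0 - alpha) with (- alpha) in Hsub by ring.
  replace (2 * alpha - alpha) with alpha in Hsub by ring.
  rewrite (is_RInt_unique _ _ _ _ (is_RInt_sqrt_cos_sym alpha)) in Hsub.
  eapply is_RInt_ext; [intros x Hx | exact Hsub].
  rewrite Rmin_left, Rmax_right in Hx by lra.
  unfold scal; simpl; unfold mult; simpl. unfold kt.
  rewrite clamp_id, <- tangent_angle_RInt by lra. reflexivity.
Qed.

Lemma is_RInt_cos_tangent_angle_shift :
  is_RInt (fun s => cos (theta s - alpha)) 0 L (2 * sin alpha).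
Proof.
  apply (is_RInt_ext (fun s => cos alpha * cos (theta s) + sin alpha * sin (theta s))).
  { intros x _. simpl. rewrite cos_minus. ring. }
  replace (2 * sin alpha) with (cos alpha * sin (2 * alpha) + sin alpha * (1 - cos (2 * alpha))).
  - apply is_RInt_lin; assumption.
  - pose proof (sin2_cos2 alpha) as H. unfold Rsqr in H.
    rewrite sin_2a, cos_2a_sin.
    transitivity (2 * sin alpha * (sin alpha * sin alpha + cos alpha * cos alpha)).
    + ring.
    + rewrite H. ring.
Qed.

Lemma energy_defect :
  is_RInt (fun s => (k s - C / sin alpha * sqrt (cos (theta s - alpha))) ^ 2) 0 L
    (2 * E - 2 * C ^ 2 / sin alpha).
Proof.
  assert (Hsin : 0 < sin alpha) by (apply sin_gt_0; pose proof PI_RGT_0; lra).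
  set (lam := C / sin alpha).
  pose proof (is_RInt_lin _ _ 0 L _ _ 1 (- 2 * lam) energy is_RInt_curvature_sqrt_cos) as H1.
  pose proof (is_RInt_lin _ _ 0 L _ _ 1 (lam ^ 2) H1 is_RInt_cos_tangent_angle_shift) as H2.
  replace (2 * E - 2 * C ^ 2 / sin alpha)
    with (1 * (1 * (2 * E) + - 2 * lam * (2 * C)) + lam ^ 2 * (2 * sin alpha))
    by (unfold lam; field; lra).
  eapply is_RInt_ext; [intros x Hx | exact H2].
  rewrite Rmin_left, Rmax_right in Hx by lra.
  pose proof (pow2_sqrt _ (cos_tangent_angle_shift_ge0 x ltac:(lra))) as Hsq.
  cbv beta. set (c := cos (theta x - alpha)) in *. set (r := sqrt c) in *.
  rewrite <- Hsq. unfold lam. simpl. ring.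
Qed.

Lemma energy_ge : C ^ 2 / sin alpha <= E.
Proof.
  assert (Hsin : 0 < sin alpha) by (apply sin_gt_0; pose proof PI_RGT_0; lra).
  pose proof (is_RInt_ge_0 _ _ _ _ (Rlt_le _ _ L_pos) energy_defect
    (fun x _ => pow2_ge_0 _)) as H.
  apply Rmult_le_reg_l with 2; [lra |].
  replace (2 * (C ^ 2 / sin alpha)) with (2 * C ^ 2 / sin alpha) by (field; lra). lra.
Qed.

Lemma energy_eq_curvature : E = C ^ 2 / sin alpha ->
  forall s, 0 <= s <= L -> k s = C / sin alpha * sqrt (cos (theta s - alpha)).
Proof.
  intros HE s Hs.
  assert (Hsin : 0 < sin alpha) by (apply sin_gt_0; pose proof PI_RGT_0; lra).
  set (lam := C / sin alpha).
  set (defect s := (kt s - lam * sqrt (cos (RInt kt 0 s - alpha))) ^ 2).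
  assert (Hcont : forall x, continuous defect x).
  { intros x. unfold defect.
    apply (continuous_ext (fun s => (kt s - lam * sqrt (cos (RInt kt 0 s - alpha))) *
      (kt s - lam * sqrt (cos (RInt kt 0 s - alpha))))); [intros; simpl; ring |].
    assert (Hd : continuous (fun s => kt s - lam * sqrt (cos (RInt kt 0 s - alpha))) x).
    { apply (continuous_minus kt); [apply kt_continuous |].
      apply (continuous_mult (fun _ => lam)); [apply continuous_const |].
      apply continuous_sqrt_cos_shift, continuous_RInt_of_continuous, kt_continuous. }
    exact (continuous_mult _ _ x Hd Hd). }
  assert (Hzero : is_RInt defect 0 L 0).
  { replace 0 with (2 * E - 2 * C ^ 2 / sin alpha) at 2 by (rewrite HE; field; lra).
    eapply is_RInt_ext; [intros x Hx | exact energy_defect].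
    rewrite Rmin_left, Rmax_right in Hx by lra.
    unfold defect, kt. rewrite clamp_id, <- tangent_angle_RInt by lra. reflexivity. }
  pose proof (RInt_eq0_nonneg_continuous defect 0 L L_pos Hcont (fun x _ => pow2_ge_0 _) Hzero s Hs)
    as Hs0.
  unfold defect, kt in Hs0. rewrite clamp_id, <- tangent_angle_RInt in Hs0 by lra.
  apply Rminus_diag_uniq, Rsqr_0_uniq. rewrite Rsqr_pow2. exact Hs0.
Qed.

End Energy_bound.

(** * Inverting a primitive *)

Section Primitive_inverse.

Variables (g : R -> R) (a b m : R).
Hypotheses (g_cont : forall x, continuous g x) (m_pos : 0 < m)
  (g_ge : forall x, m <= g x) (a_le_b : a <= b).

Lemma primitive_increase x y : x <= y -> m * (y - x) <= RInt g a y - RInt g a x.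
Proof.
  intros Hxy.
  rewrite <- (RInt_Chasles g a x y) by apply ex_RInt_of_continuous, g_cont.
  assert (Hconst : RInt (fun _ => m) x y <= RInt g x y).
  { apply RInt_le; [exact Hxy | apply ex_RInt_of_continuous, continuous_const |
      apply ex_RInt_of_continuous, g_cont | intros; apply g_ge]. }
  rewrite RInt_const in Hconst. unfold plus, scal in *; simpl in *; unfold mult in *; simpl in *.
  lra.
Qed.

(* Total by clamping: arguments outside [0, int_a^b g] are sent to a or b. *)
Definition primitive_inverse (s : R) : R :=
  epsilon (inhabits a) (fun w => a <= w <= b /\ RInt g a w = clamp 0 (RInt g a b) s).

Lemma primitive_inverse_spec s :
  a <= primitive_inverse s <= b /\
  RInt g a (primitive_inverse s) = clamp 0 (RInt g a b) s.
Proof.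
  unfold primitive_inverse. apply epsilon_spec.
  assert (Hab : 0 <= RInt g a b).
  { pose proof (primitive_increase a b a_le_b) as H.
    rewrite RInt_point_R in H. simpl in H. nra. }
  destruct (IVT_gen (fun w => RInt g a w) a b (clamp 0 (RInt g a b) s)) as [w [Hw Hws]].
  - intros x. apply continuity_pt_filterlim, continuous_RInt_of_continuous, g_cont.
  - rewrite RInt_point_R, Rmin_left, Rmax_right by exact Hab.
    apply clamp_in, Hab.
  - exists w. rewrite Rmin_left, Rmax_right in Hw by exact a_le_b. auto.
Qed.

Lemma primitive_inverse_lipschitz s t :
  Rabs (primitive_inverse s - primitive_inverse t) <= / m * Rabs (s - t).
Proof.
  destruct (primitive_inverse_spec s) as [_ Hs].
  destruct (primitive_inverse_spec t) as [_ Ht].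
  pose proof (clamp_lipschitz 0 (RInt g a b) s t) as Hclamp.
  rewrite <- Hs, <- Ht in Hclamp.
  set (u := primitive_inverse s) in *. set (v := primitive_inverse t) in *.
  assert (Hgap : m * Rabs (u - v) <= Rabs (RInt g a u - RInt g a v)).
  { destruct (Rle_dec u v) as [Huv | Huv].
    - pose proof (primitive_increase u v Huv).
      rewrite Rabs_minus_sym, (Rabs_minus_sym (RInt g a u)), !Rabs_right; nra.
    - pose proof (primitive_increase v u ltac:(lra)).
      rewrite !Rabs_right; nra. }
  apply Rmult_le_reg_l with m; [exact m_pos |].
  rewrite <- Rmult_assoc, Rinv_r, Rmult_1_l by lra. lra.
Qed.

Lemma primitive_inverse_continuous x : continuous primitive_inverse x.
Proof.
  apply (lipschitz_continuous _ (/ m)); [left; apply Rinv_0_lt_compat, m_pos |].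
  apply primitive_inverse_lipschitz.
Qed.

Lemma primitive_inverse_primitive w : a <= w <= b -> primitive_inverse (RInt g a w) = w.
Proof.
  intros Hw. destruct (primitive_inverse_spec (RInt g a w)) as [_ H].
  set (u := primitive_inverse (RInt g a w)) in *.
  rewrite clamp_id in H.
  - destruct (Rtotal_order u w) as [Hlt | [Heq | Hgt]]; [exfalso | exact Heq | exfalso].
    + pose proof (primitive_increase u w ltac:(lra)). nra.
    + pose proof (primitive_increase w u ltac:(lra)). nra.
  - pose proof (primitive_increase a w ltac:(lra)).
    pose proof (primitive_increase w b ltac:(lra)).
    rewrite RInt_point_R in *. simpl in *. nra.
Qed.

Lemma is_RInt_primitive_inverse (G : R -> R) c V : a <= c <= b ->
  (forall x, continuous G x) -> is_RInt (fun w => g w * G w) a c V ->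
  is_RInt (fun s => G (primitive_inverse s)) 0 (RInt g a c) V.
Proof.
  intros Hc HG HV.
  assert (HGi : forall x, continuous (fun s => G (primitive_inverse s)) x).
  { intros x. apply (continuous_comp primitive_inverse G);
      [apply primitive_inverse_continuous | apply HG]. }
  pose proof (is_RInt_comp (fun s => G (primitive_inverse s)) (fun w => RInt g a w) g a c
    (fun x _ => HGi _) (fun x _ => conj (is_derive_RInt_of_continuous g a x g_cont) (g_cont x))) as H.
  cbv beta in H. rewrite RInt_point_R in H.
  replace V with (RInt (fun s => G (primitive_inverse s)) 0 (RInt g a c)).
  - apply is_RInt_of_continuous, HGi.
  - symmetry. apply (is_RInt_unique (fun w => g w * G w) a c) in HV. rewrite <- HV.
    apply is_RInt_unique. eapply is_RInt_ext; [intros x Hx | exact H].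
    rewrite Rmin_left, Rmax_right in Hx by lra.
    cbv beta. rewrite primitive_inverse_primitive by lra. reflexivity.
Qed.

End Primitive_inverse.

(** * The elastica *)

Lemma sqrt2_sqr : sqrt 2 * sqrt 2 = 2.
Proof. apply sqrt_sqrt. lra. Qed.

(* Writing theta - alpha = elastica_angle w, i.e. sin ((theta - alpha) / 2) = sin w / sqrt 2,
   turns sqrt (cos (theta - alpha)) into cos w and removes the singularity of the arc length
   d theta / sqrt (cos (theta - alpha)) at theta - alpha = +- PI / 2. *)
Definition elastica_angle (w : R) : R := 2 * asin (sin w / sqrt 2).

Definition elastica_weight (w : R) : R := / sqrt (1 - sin w ^ 2 / 2).

Lemma half_sin_sqr_bounds w : 1 / 2 <= 1 - sin w ^ 2 / 2 <= 1.
Proof. pose proof (SIN_bound w). pose proof (pow2_ge_0 (sin w)). nra. Qed.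

Lemma sin_div_sqrt2_bounds w : -1 < sin w / sqrt 2 < 1.
Proof.
  pose proof (SIN_bound w). pose proof Rlt_sqrt2_0. pose proof sqrt2_sqr.
  assert (1 < sqrt 2) by nra.
  split; apply Rmult_lt_reg_r with (sqrt 2); try (unfold Rdiv; rewrite Rmult_assoc, Rinv_l); lra.
Qed.

Lemma sqr_div_sqrt2 x : (x / sqrt 2)² = x ^ 2 / 2.
Proof.
  pose proof Rlt_sqrt2_0. unfold Rsqr.
  replace (x / sqrt 2 * (x / sqrt 2)) with (x * x / (sqrt 2 * sqrt 2)) by (field; lra).
  rewrite sqrt2_sqr. field.
Qed.

Lemma sqrt_half_sin_pos w : 0 < sqrt (1 - sin w ^ 2 / 2).
Proof. apply sqrt_lt_R0. pose proof (half_sin_sqr_bounds w). lra. Qed.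

Lemma elastica_weight_ge1 w : 1 <= elastica_weight w.
Proof.
  unfold elastica_weight. pose proof (half_sin_sqr_bounds w). pose proof (sqrt_half_sin_pos w).
  assert (sqrt (1 - sin w ^ 2 / 2) <= 1) by (rewrite <- sqrt_1 at 2; apply sqrt_le_1_alt; lra).
  apply Rmult_le_reg_l with (sqrt (1 - sin w ^ 2 / 2)); [lra |].
  rewrite Rinv_r; lra.
Qed.

Lemma elastica_weight_continuous w : continuous elastica_weight w.
Proof.
  apply continuous_Rinv_comp; [| apply Rgt_not_eq, sqrt_half_sin_pos].
  apply continuous_sqrt_comp, (continuous_minus (fun _ => 1)); [apply continuous_const |].
  apply (continuous_ext (fun y => sin y * sin y * / 2)); [intros; simpl; field |].
  apply (continuous_mult (fun y => sin y * sin y) (fun _ => / 2)); [| apply continuous_const].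
  apply (continuous_mult sin sin); apply continuous_sin.
Qed.

Lemma elastica_angle_half w : elastica_angle w / 2 = asin (sin w / sqrt 2).
Proof. unfold elastica_angle. field. Qed.

Lemma cos_elastica_angle_half w : cos (elastica_angle w / 2) * elastica_weight w = 1.
Proof.
  pose proof (sin_div_sqrt2_bounds w). pose proof (sqrt_half_sin_pos w).
  rewrite elastica_angle_half, cos_asin, sqr_div_sqrt2 by lra.
  unfold elastica_weight. field. lra.
Qed.

Lemma cos_elastica_angle w : cos (elastica_angle w) = cos w ^ 2.
Proof.
  pose proof (sin_div_sqrt2_bounds w). pose proof (sin2_cos2 w) as H1. unfold Rsqr in H1.
  replace (elastica_angle w) with (2 * (elastica_angle w / 2)) by field.
  rewrite cos_2a_sin, elastica_angle_half, sin_asin by lra.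
  pose proof (sqr_div_sqrt2 (sin w)) as H2. unfold Rsqr in H2.
  rewrite Rmult_assoc, H2. nra.
Qed.

Lemma sin_elastica_angle w : sin (elastica_angle w) * elastica_weight w = sqrt 2 * sin w.
Proof.
  pose proof (sin_div_sqrt2_bounds w). pose proof Rlt_sqrt2_0.
  replace (elastica_angle w) with (2 * (elastica_angle w / 2)) by field.
  rewrite sin_2a, Rmult_assoc, cos_elastica_angle_half, elastica_angle_half, sin_asin by lra.
  rewrite <- sqrt2_sqr at 1. field. lra.
Qed.

Lemma is_derive_elastica_angle w :
  is_derive elastica_angle w (sqrt 2 * cos w * elastica_weight w).
Proof.
  pose proof (sin_div_sqrt2_bounds w) as Hb. pose proof Rlt_sqrt2_0 as Hs2.
  assert (Hasin : is_derive asin (sin w / sqrt 2) (1 / sqrt (1 - (sin w / sqrt 2)²))).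
  { apply is_derive_Reals, (derive_pt_eq_1 _ _ _ (derivable_pt_asin _ Hb)), derive_pt_asin. }
  assert (Hin : is_derive (fun x => sin x / sqrt 2) w (cos w / sqrt 2)).
  { auto_derive; [exact I | field; lra]. }
  pose proof (is_derive_scal _ _ 2 _ (is_derive_comp _ _ w _ _ Hasin Hin)) as H.
  unfold scal in H; simpl in H; unfold mult in H; simpl in H.
  replace (sqrt 2 * cos w * elastica_weight w)
    with (2 * (cos w / sqrt 2 * (1 / sqrt (1 - (sin w / sqrt 2)²)))); [exact H |].
  rewrite sqr_div_sqrt2. unfold elastica_weight.
  pose proof (sqrt_half_sin_pos w). rewrite <- sqrt2_sqr at 1. field. lra.
Qed.

Lemma continuous_elastica_angle_derivative w :
  continuous (fun w => sqrt 2 * cos w * elastica_weight w) w.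
Proof.
  apply (continuous_mult (fun w => sqrt 2 * cos w)); [| apply elastica_weight_continuous].
  apply (continuous_mult (fun _ => sqrt 2)); [apply continuous_const | apply continuous_cos].
Qed.

Lemma continuous_elastica_angle w : continuous elastica_angle w.
Proof.
  apply (ex_derive_continuous (K := R_AbsRing) (V := R_NormedModule)).
  eexists. apply is_derive_elastica_angle.
Qed.

Lemma continuous_scaled_cos c x : continuous (fun w => c * cos w) x.
Proof. apply (continuous_mult (fun _ => c) cos); [apply continuous_const | apply continuous_cos]. Qed.

Lemma elastica_angle_opp w : elastica_angle (- w) = - elastica_angle w.
Proof. unfold elastica_angle, Rdiv. rewrite sin_neg, Ropp_mult_distr_l_reverse, asin_opp. ring. Qed.

Lemma elastica_angle_endpoint alpha : 0 < alpha <= PI / 2 ->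
  let beta := asin (sqrt 2 * sin (alpha / 2)) in
  0 < beta <= PI / 2 /\ elastica_angle beta = alpha.
Proof.
  intros Ha beta. pose proof PI_RGT_0. pose proof Rlt_sqrt2_0.
  assert (Hs : 0 < sin (alpha / 2)) by (apply sin_gt_0; lra).
  assert (Hs1 : sin (alpha / 2) <= 1 / sqrt 2)
    by (rewrite <- sin_PI4; apply sin_incr_1; lra).
  assert (Hx : 0 < sqrt 2 * sin (alpha / 2) <= 1).
  { split; [apply Rmult_lt_0_compat; lra |].
    apply Rmult_le_reg_r with (/ sqrt 2); [apply Rinv_0_lt_compat; lra |].
    replace (sqrt 2 * sin (alpha / 2) * / sqrt 2) with (sin (alpha / 2)) by (field; lra).
    lra. }
  assert (Hsb : sin beta = sqrt 2 * sin (alpha / 2)) by (apply sin_asin; lra).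
  pose proof (asin_bound (sqrt 2 * sin (alpha / 2))) as Hb. fold beta in Hb.
  split; [split; [| apply Hb] |].
  - apply Rnot_le_lt. intros Hle.
    assert (Hneg : 0 <= sin (- beta)) by (apply sin_ge_0; lra).
    rewrite sin_neg in Hneg. lra.
  - unfold elastica_angle. rewrite Hsb.
    replace (sqrt 2 * sin (alpha / 2) / sqrt 2) with (sin (alpha / 2)) by (field; lra).
    rewrite asin_sin by lra. field.
Qed.

Section Elastica_competitor.

Variable alpha : R.
Hypothesis alpha_bounds : 0 < alpha <= PI / 2.

(* The equality case k = lam sqrt (cos (theta - alpha)) in the variable w of [elastica_angle]:
   with theta = alpha + elastica_angle w one gets k = lam cos w and
   ds = d theta / k = elastica_weight w / nu dw, where nu = lam / sqrt 2 = J / (2 sin alpha). *)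
Let beta := asin (sqrt 2 * sin (alpha / 2)).
Let J := RInt (fun w => elastica_weight w * cos w ^ 2) (- beta) beta.
Let nu := J / (2 * sin alpha).
Let arc w := elastica_weight w / nu.
Let L' := RInt arc (- beta) beta.
Let psi := primitive_inverse arc (- beta) beta.
Let theta' s := alpha + elastica_angle (psi s).
Let k' s := sqrt 2 * nu * cos (psi s).

Let beta_bounds : 0 < beta <= PI / 2.
Proof. exact (proj1 (elastica_angle_endpoint alpha alpha_bounds)). Qed.

Let elastica_angle_beta : elastica_angle beta = alpha.
Proof. exact (proj2 (elastica_angle_endpoint alpha alpha_bounds)). Qed.

Let elastica_angle_neg_beta : elastica_angle (- beta) = - alpha.
Proof. rewrite elastica_angle_opp, elastica_angle_beta. reflexivity. Qed.

Let sin_alpha_pos : 0 < sin alpha.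
Proof. apply sin_gt_0; pose proof PI_RGT_0; lra. Qed.

Let weight_cos2_continuous x : continuous (fun w => elastica_weight w * cos w ^ 2) x.
Proof.
  apply (continuous_mult elastica_weight (fun w => cos w ^ 2));
    [apply elastica_weight_continuous |].
  apply (continuous_ext (fun w => cos w * cos w)); [intros; simpl; ring |].
  apply (continuous_mult cos cos); apply continuous_cos.
Qed.

Let is_RInt_J : is_RInt (fun w => elastica_weight w * cos w ^ 2) (- beta) beta J.
Proof. apply is_RInt_of_continuous, weight_cos2_continuous. Qed.

Let J_pos : 0 < J.
Proof.
  apply RInt_gt_0; [lra | | intros; apply weight_cos2_continuous].
  intros x Hx. apply Rmult_lt_0_compat.
  - pose proof (elastica_weight_ge1 x). lra.
  - apply pow_lt, cos_gt_0; lra.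
Qed.

Let nu_pos : 0 < nu.
Proof. apply Rdiv_lt_0_compat; lra. Qed.

(* The substitution t = elastica_angle w in the integral of sqrt (cos t). *)
Let sqrt_cos_J : 2 * RInt (fun t => sqrt (cos t)) 0 alpha = sqrt 2 * J.
Proof.
  pose proof (is_RInt_comp (fun t => sqrt (cos t)) elastica_angle
    (fun w => sqrt 2 * cos w * elastica_weight w) (- beta) beta
    (fun x _ => continuous_sqrt_cos _)
    (fun x _ => conj (is_derive_elastica_angle x) (continuous_elastica_angle_derivative x)))
    as Hsub.
  rewrite elastica_angle_beta, elastica_angle_neg_beta in Hsub.
  rewrite (is_RInt_unique _ _ _ _ (is_RInt_sqrt_cos_sym alpha)) in Hsub.
  apply is_RInt_unique in Hsub. rewrite <- Hsub.
  apply is_RInt_unique.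
  eapply is_RInt_ext; [intros x Hx | exact (is_RInt_mult_l _ _ _ (sqrt 2) _ is_RInt_J)].
  rewrite Rmin_left, Rmax_right in Hx by lra.
  unfold scal; simpl; unfold mult; simpl.
  rewrite cos_elastica_angle, sqrt_pow2 by (apply cos_ge_0; lra). ring.
Qed.

Let arc_continuous x : continuous arc x.
Proof.
  apply (continuous_mult elastica_weight (fun _ => / nu));
    [apply elastica_weight_continuous | apply continuous_const].
Qed.

Let arc_ge x : / nu <= arc x.
Proof.
  unfold arc, Rdiv. pose proof (elastica_weight_ge1 x).
  pose proof (Rinv_0_lt_compat _ nu_pos). nra.
Qed.

Let inv_nu_pos : 0 < / nu.
Proof. apply Rinv_0_lt_compat, nu_pos. Qed.

Let beta_interval : - beta <= beta.
Proof. lra. Qed.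

Let psi_spec s : - beta <= psi s <= beta /\ RInt arc (- beta) (psi s) = clamp 0 L' s.
Proof. exact (primitive_inverse_spec _ _ _ _ arc_continuous inv_nu_pos arc_ge beta_interval s). Qed.

Let L'_pos : 0 < L'.
Proof.
  pose proof (primitive_increase arc (- beta) (/ nu) arc_continuous arc_ge (- beta) beta
    ltac:(lra)) as H.
  rewrite RInt_point_R in H. pose proof (Rinv_0_lt_compat _ nu_pos). fold L' in H. nra.
Qed.

Let is_RInt_along_arc (G : R -> R) c V : - beta <= c <= beta -> (forall x, continuous G x) ->
  is_RInt (fun w => arc w * G w) (- beta) c V ->
  is_RInt (fun s => G (psi s)) 0 (RInt arc (- beta) c) V.
Proof.
  exact (is_RInt_primitive_inverse _ _ _ _ arc_continuous inv_nu_pos arc_ge beta_interval G c V).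
Qed.

Let is_RInt_sin : is_RInt sin (- beta) beta 0.
Proof.
  replace 0 with (minus (- cos beta) (- cos (- beta)))
    by (rewrite cos_neg; unfold minus, plus, opp; simpl; ring).
  apply (is_RInt_derive (fun x => - cos x)).
  - intros x _. auto_derive; [exact I | ring].
  - intros x _. apply continuous_sin.
Qed.

Lemma competitor_curvature_ge0 s : 0 <= s <= L' -> 0 <= k' s.
Proof.
  intros Hs. destruct (psi_spec s) as [Hr _]. unfold k'.
  pose proof Rlt_sqrt2_0. apply Rmult_le_pos; [nra | apply cos_ge_0; lra].
Qed.

Lemma competitor_theta_primitive s : 0 <= s <= L' -> is_RInt k' 0 s (theta' s).
Proof.
  intros Hs. destruct (psi_spec s) as [Hr Hpsi]. rewrite clamp_id in Hpsi by exact Hs.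
  rewrite <- Hpsi at 1. unfold k'.
  apply (is_RInt_along_arc (fun w => sqrt 2 * nu * cos w)); [exact Hr | |].
  - intros x. apply continuous_scaled_cos.
  - replace (theta' s) with (minus (elastica_angle (psi s)) (elastica_angle (- beta)))
      by (unfold theta'; rewrite elastica_angle_neg_beta; unfold minus, plus, opp; simpl; ring).
    apply (is_RInt_ext (fun w => sqrt 2 * cos w * elastica_weight w)).
    { intros x _. simpl. unfold arc. field. lra. }
    apply (is_RInt_derive elastica_angle); intros x _;
      [apply is_derive_elastica_angle | apply continuous_elastica_angle_derivative].
Qed.

Lemma competitor_theta_end : theta' L' = 2 * alpha.
Proof.
  unfold theta', psi, L'.
  rewrite (primitive_inverse_primitive _ _ _ _ arc_continuous inv_nu_pos arc_ge beta_interval)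
    by lra.
  rewrite elastica_angle_beta. ring.
Qed.

Let J_div_nu : J / nu = 2 * sin alpha.
Proof. unfold nu. field. lra. Qed.

Let continuous_of_tangent_angle (f : R -> R) x : (forall t, continuous f t) ->
  continuous (fun w => f (alpha + elastica_angle w)) x.
Proof.
  intros Hf. apply (continuous_comp elastica_angle (fun t => f (alpha + t)));
    [apply continuous_elastica_angle |].
  apply (continuous_comp (fun t => alpha + t) f); [| apply Hf].
  apply (continuous_plus (fun _ => alpha) (fun t => t));
    [apply continuous_const | apply continuous_id].
Qed.

Lemma competitor_cos_theta : is_RInt (fun s => cos (theta' s)) 0 L' (sin (2 * alpha)).
Proof.
  apply (is_RInt_along_arc (fun w => cos (alpha + elastica_angle w))); [lra | |].
  { intros x. apply continuous_of_tangent_angle, continuous_cos. }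
  replace (sin (2 * alpha)) with (cos alpha / nu * J + - (sqrt 2 * sin alpha) / nu * 0)
    by (rewrite sin_2a, <- J_div_nu; field; lra).
  eapply is_RInt_ext; [intros x _ | exact (is_RInt_lin _ _ _ _ _ _ _ _ is_RInt_J is_RInt_sin)].
  simpl. unfold arc. pose proof (elastica_weight_ge1 x).
  rewrite cos_plus, cos_elastica_angle.
  replace (sin (elastica_angle x)) with (sqrt 2 * sin x / elastica_weight x)
    by (rewrite <- sin_elastica_angle; field; lra).
  field. lra.
Qed.

Lemma competitor_sin_theta :
  is_RInt (fun s => sin (theta' s)) 0 L' (1 - cos (2 * alpha)).
Proof.
  apply (is_RInt_along_arc (fun w => sin (alpha + elastica_angle w))); [lra | |].
  { intros x. apply continuous_of_tangent_angle, continuous_sin. }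
  replace (1 - cos (2 * alpha)) with (sin alpha / nu * J + sqrt 2 * cos alpha / nu * 0)
    by (rewrite cos_2a_sin, <- J_div_nu; field; lra).
  eapply is_RInt_ext; [intros x _ | exact (is_RInt_lin _ _ _ _ _ _ _ _ is_RInt_J is_RInt_sin)].
  simpl. unfold arc. pose proof (elastica_weight_ge1 x).
  rewrite sin_plus, cos_elastica_angle.
  replace (sin (elastica_angle x)) with (sqrt 2 * sin x / elastica_weight x)
    by (rewrite <- sin_elastica_angle; field; lra).
  field. lra.
Qed.

Lemma competitor_energy :
  is_RInt (fun s => k' s ^ 2) 0 L' (2 * (RInt (fun t => sqrt (cos t)) 0 alpha ^ 2 / sin alpha)).
Proof.
  unfold k'. apply (is_RInt_along_arc (fun w => (sqrt 2 * nu * cos w) ^ 2)); [lra | |].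
  { intros x. apply (continuous_ext (fun w => (sqrt 2 * nu * cos w) * (sqrt 2 * nu * cos w)));
      [intros; simpl; ring |].
    apply (continuous_mult (fun w => sqrt 2 * nu * cos w) (fun w => sqrt 2 * nu * cos w));
      apply continuous_scaled_cos. }
  replace (2 * (RInt (fun t => sqrt (cos t)) 0 alpha ^ 2 / sin alpha)) with (2 * nu * J).
  - eapply is_RInt_ext; [intros x _ | exact (is_RInt_mult_l _ _ _ (2 * nu) _ is_RInt_J)].
    simpl. unfold arc.
    replace (sqrt 2 * nu * cos x * (sqrt 2 * nu * cos x * 1))
      with (sqrt 2 * sqrt 2 * (nu * nu * cos x * cos x)) by ring.
    rewrite sqrt2_sqr. field. lra.
  - assert (HC : @eq R (RInt (fun t => sqrt (cos t)) 0 alpha) (sqrt 2 * J / 2))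
      by (pose proof sqrt_cos_J; lra).
    rewrite HC. unfold nu.
    replace ((sqrt 2 * J / 2) ^ 2) with (sqrt 2 * sqrt 2 * J ^ 2 / 4) by field.
    rewrite sqrt2_sqr. field. lra.
Qed.

Lemma elastica_competitor : exists L' theta' k', Defs.admissible alpha L' theta' k' /\
  Defs.has_energy L' k' (RInt (fun t => sqrt (cos t)) 0 alpha ^ 2 / sin alpha).
Proof.
  exists L', theta', k'. repeat split.
  - exact L'_pos.
  - apply competitor_curvature_ge0.
  - intros s Hs. apply Defs_is_RIntE, competitor_theta_primitive, Hs.
  - exact competitor_theta_end.
  - apply Defs_is_RIntE, competitor_cos_theta.
  - apply Defs_is_RIntE, competitor_sin_theta.
  - apply Defs_is_RIntE, competitor_energy.
Qed.

End Elastica_competitor.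

Import Defs.

Theorem mainTheorem8 (alpha L : R) (theta k : R -> R) (Emin : R) :
  0 < alpha <= PI / 2 ->
  is_minimizer alpha L theta k Emin ->
  continuous_on_interval k 0 L ->
  k 0 <= 1 -> k L <= 1 ->
  exists C : R, is_RInt (fun t => sqrt (cos t)) 0 alpha C /\
    k 0 = k L /\
    (forall s, 0 <= s <= L ->
       / 2 * (k s) ^ 2 = / (2 * (sin alpha) ^ 2) * C ^ 2 * cos (theta s - alpha)) /\
    Emin = / sin alpha * C ^ 2.
Proof.
  intros Ha [[HL [Hk0 [Hth [HthL [Hcos Hsin]]]]] [HE Hmin]] Hkc _ _.
  apply Defs_is_RIntE in Hcos, Hsin, HE.
  assert (Hth' : forall s, 0 <= s <= L -> RInt.is_RInt k 0 s (theta s))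
    by (intros s Hs; apply Defs_is_RIntE, Hth, Hs).
  set (C := RInt (fun t => sqrt (cos t)) 0 alpha).
  assert (Hsin_pos : 0 < sin alpha) by (apply sin_gt_0; pose proof PI_RGT_0; lra).
  assert (Hopt : Emin = C ^ 2 / sin alpha).
  { destruct (elastica_competitor alpha Ha) as (L' & theta' & k' & Hadm' & HE').
    apply Rle_antisym; [exact (Hmin _ _ _ _ Hadm' HE') |].
    exact (energy_ge _ _ _ _ _ Ha HL Hkc Hk0 Hth' HthL Hcos Hsin HE). }
  pose proof (energy_eq_curvature _ _ _ _ _ Ha HL Hkc Hk0 Hth' HthL Hcos Hsin HE Hopt) as Hk.
  fold C in Hk.
  exists C. repeat split.
  - apply Defs_is_RIntE, is_RInt_of_continuous, continuous_sqrt_cos.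
  - rewrite (Hk 0), (Hk L), (tangent_angle_0 L theta k HL Hth'), HthL by lra.
    replace (0 - alpha) with (- alpha) by ring.
    replace (2 * alpha - alpha) with alpha by ring.
    rewrite cos_neg. reflexivity.
  - intros s Hs. rewrite (Hk s Hs), Rpow_mult_distr, pow2_sqrt
      by exact (cos_tangent_angle_shift_ge0 _ _ _ _ Ha HL Hkc Hk0 Hth' HthL s Hs).
    field. lra.
  - rewrite Hopt. field. lra.
Qed.
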